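(* Let $(\mathfrak g,\mu,P)$ be a Nijenhuis Lie algebra and $(M,P_M)$ a Nijenhuis representation over it. Then the map $\Psi_M:\mathrm C^\bullet_{\mathrm{Lie}}(\mathfrak g,M)\to\mathrm C^\bullet_{\mathrm{NjO}}(\mathfrak g,M)$ is a chain map, i.e. $\Psi_M\circ\delta_{\mathrm{Lie},M}=\delta_{\mathrm{NjO},M}\circ\Psi_M$.
   Context: All vector spaces are over a field $\mathbf k$ of characteristic $0$. A Nijenhuis Lie algebra is a Lie algebra $(\mathfrak g,\mu=[-,-]_\mu)$ with linear $P:\mathfrak g\to\mathfrak g$ satisfying $[Pa,Pb]_\mu=P([Pa,b]_\mu+[a,Pb]_\mu-P[a,b]_\mu)$. A Nijenhuis representation is a Lie algebra representation $M$ of $(\mathfrak g,\mu)$ (action $ax$) with linear $P_M:M\to M$ such that $P(a)P_M(x)=P_M(P(a)x+aP_M(x)-P_M(ax))$. Chevalley–Eilenberg complex: $\mathrm C^n_{\mathrm{Lie}}(\mathfrak g,M)=\mathrm{Hom}(\wedge^n\mathfrak g,M)$, $\delta_{\mathrm{Lie},M}(f)(a_1,\dots,a_{n+1})=\sum_i(-1)^{i-1}a_if(\dots,\widehat{a_i},\dots)+\sum_{i<j}(-1)^{i+j}f([a_i,a_j]_\mu,\dots,\widehat{a_i},\dots,\widehat{a_j},\dots)$. With $[a,b]_P:=[Pa,b]_\mu+[a,Pb]_\mu-P[a,b]_\mu$, let $\partial$ be the Chevalley–Eilenberg differential of $[-,-]_P$ with coefficients in $M$ with action $a\rhd x:=P(a)x$,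 i.e. $\partial(f)(a_1,\dots,a_{n+1})=\sum_i(-1)^{i-1}P(a_i)f(\dots,\widehat{a_i},\dots)+\sum_{i<j}(-1)^{i+j}f([a_i,a_j]_P,\dots,\widehat{a_i},\dots,\widehat{a_j},\dots)$. Then $\mathrm C^n_{\mathrm{NjO}}(\mathfrak g,M):=\mathrm{Hom}(\wedge^n\mathfrak g,M)$ with $\delta_{\mathrm{NjO},M}(f):=-P_M\circ\delta_{\mathrm{Lie},M}(f)+\partial(f)$. The map $\Psi_M$ is $\mathrm{Id}_M$ in degree $0$, and for $n\ge1$, $f\in\mathrm C^n_{\mathrm{Lie}}(\mathfrak g,M)$: $\Psi_M(f)(a_1,\dots,a_n)=\sum_{k=0}^n\sum_{1\le i_1<\dots<i_k\le n}(-1)^{n-k}P_M^{\,n-k}\big(f(a_1,\dots,P(a_{i_1}),\dots,P(a_{i_k}),\dots,a_n)\big)$, where $P$ is applied exactly to the arguments in positions $i_1,\dots,i_k$. *)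

From HB Require Import structures.
From mathcomp Require Import all_boot all_order all_algebra.
Set Implicit Arguments. Unset Strict Implicit. Unset Printing Implicit Defensive.
Import Order.TTheory GRing.Theory Num.Theory.
Local Open Scope ring_scope.

(* Cochains of degree n are functions  f : seq g -> M  of which only the
   values on lists of length n matter; Hom(wedge^n g, M) = multilinear,
   alternating such maps.  Positions are 0-indexed. *)

Section Nijenhuis.
Variable k : fieldType.

Definition lin_map (U V : lmodType k) (F : U -> V) :=
  forall (a : k) (u v : U), F (a *: u + v) = a *: F u + F v.

Definition bilin_map (U V W : lmodType k) (b : U -> V -> W) :=
  (forall u, lin_map (b u)) /\ (forall v, lin_map (fun u => b u v)).

Variables (g M : lmodType k).

Definition is_lie_algebra (mu : g -> g -> g) :=
  [/\ bilin_map mu, (forall a, mu a a = 0) &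
      (forall a b c, mu a (mu b c) + mu b (mu c a) + mu c (mu a b) = 0)].

Definition is_lie_rep (mu : g -> g -> g) (act : g -> M -> M) :=
  bilin_map act /\
  (forall a b x, act (mu a b) x = act a (act b x) - act b (act a x)).

Definition is_nijenhuis (mu : g -> g -> g) (P : g -> g) :=
  forall a b, mu (P a) (P b) = P (mu (P a) b + mu a (P b) - P (mu a b)).

Definition is_nijenhuis_rep (act : g -> M -> M) (P : g -> g) (PM : M -> M) :=
  forall a x, act (P a) (PM x) = PM (act (P a) x + act a (PM x) - PM (act a x)).

Definition bracketP (mu : g -> g -> g) (P : g -> g) (a b : g) :=
  mu (P a) b + mu a (P b) - P (mu a b).

Definition multilinear (n : nat) (f : seq g -> M) :=
  forall s t : seq g, (size s + (size t).+1)%N = n ->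
    lin_map (fun v => f (s ++ v :: t)).

Definition alternating (n : nat) (f : seq g -> M) :=
  forall (s : seq g) (i j : nat), size s = n -> (i < j < n)%N ->
    s`_i = s`_j -> f s = 0.

Definition del1 (i : nat) (s : seq g) : seq g :=
  [seq s`_l | l <- iota 0 (size s) & l != i].
Definition del2 (i j : nat) (s : seq g) : seq g :=
  [seq s`_l | l <- iota 0 (size s) & (l != i) && (l != j)].

(* Chevalley-Eilenberg differential of bracket br with action act
   (0-indexed: (-1)^(i-1) becomes (-1)^i, (-1)^(i+j) is unchanged) *)
Definition CE_diff (br : g -> g -> g) (act : g -> M -> M)
    (f : seq g -> M) (s : seq g) : M :=
  \sum_(i < size s) (-1) ^+ i *: act s`_i (f (del1 i s))
  + \sum_(i < size s) \sum_(j < size s | (i < j)%N)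
      (-1) ^+ (i + j) *: f (br s`_i s`_j :: del2 i j s).

Definition delta_Lie (mu : g -> g -> g) (act : g -> M -> M) := CE_diff mu act.

Definition partialP (mu : g -> g -> g) (act : g -> M -> M) (P : g -> g) :=
  CE_diff (bracketP mu P) (fun a x => act (P a) x).

Definition delta_NjO (mu : g -> g -> g) (act : g -> M -> M) (P : g -> g)
    (PM : M -> M) (f : seq g -> M) (s : seq g) : M :=
  - PM (delta_Lie mu act f s) + partialP mu act P f s.

Definition applyP (P : g -> g) (s : seq g) (S : {set 'I_(size s)}) : seq g :=
  [seq (if i \in S then P s`_i else s`_i) | i <- enum 'I_(size s)].

(* Psi_M (degree n = size of the argument list; degree 0 gives Id) *)
Definition PsiM (P : g -> g) (PM : M -> M) (f : seq g -> M) (s : seq g) : M :=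
  \sum_(S : {set 'I_(size s)})
    (-1) ^+ (size s - #|S|) *: iter (size s - #|S|) PM (f (applyP P S)).

End Nijenhuis.

(* Splitting the subsets of positions according to whether they contain the
   first one gives the recursion
     Psi f (a :: t) = Psi (f (P a :: _)) t - P_M (Psi (f (a :: _)) t);
   by the same splitting Psi can be expanded along any single argument, and it
   commutes with every additive map commuting with P_M.  Expanding
   Psi (delta_Lie f) along the arguments singled out by each term of the
   differential, the action terms match those of delta_NjO (Psi f) because
   x |-> act (P a) x - P_M (act a x) commutes with P_M, which is the Nijenhuis
   representation identity, and the bracket terms match because
   P [a, b]_P = [P a, P b] and f is linear in its first argument. *)

From HB Require Import structures.
From mathcomp Require Import all_boot all_order all_algebra zify.
Import GRing.Theory.
Local Open Scope ring_scope.

Section Deletion.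
Context {k : fieldType} {g : lmodType k}.
Implicit Types (x : g) (s : seq g).

Definition keep_at (p : pred nat) (s : seq g) : seq g :=
  [seq s`_l | l <- iota 0 (size s) & p l].

Lemma keep_at_cons p x s :
  keep_at p (x :: s) =
  if p 0%N then x :: keep_at (p \o succn) s else keep_at (p \o succn) s.
Proof.
rewrite /keep_at /= (iotaDl 1 0) filter_map.
by case: (p 0%N) => /=; [congr (_ :: _)|]; rewrite -map_comp; apply: eq_map.
Qed.

Lemma eq_keep_at p q s : p =1 q -> keep_at p s = keep_at q s.
Proof. by move=> epq; rewrite /keep_at (eq_filter epq). Qed.

Lemma keep_at_predT s : keep_at predT s = s.
Proof. by elim: s => [|x s IHs] //; rewrite keep_at_cons IHs. Qed.

Lemma del1_keep_at i s : del1 i s = keep_at (predC1 i) s.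
Proof. by []. Qed.

Lemma del2_keep_at i j s : del2 i j s = keep_at [pred l | (l != i) && (l != j)] s.
Proof. by []. Qed.

Lemma del1_0 x s : del1 0 (x :: s) = s.
Proof.
rewrite -[RHS]keep_at_predT del1_keep_at keep_at_cons.
exact: eq_keep_at.
Qed.

Lemma del1_S i x s : del1 i.+1 (x :: s) = x :: del1 i s.
Proof. by rewrite del1_keep_at keep_at_cons. Qed.

Lemma del2_del1 i j s : (i < j)%N -> del2 i j s = del1 i (del1 j s).
Proof.
elim: s i j => [|x s IHs] i [|j] //= lt_ij.
rewrite del2_keep_at keep_at_cons del1_S.
case: i lt_ij => [|i] lt_ij /=.
  by rewrite del1_0; apply: eq_keep_at => l /=; rewrite eqSS.
by rewrite del1_S -IHs.
Qed.

Lemma nth_del1 i j s : (i < j)%N -> (del1 j s)`_i = s`_i.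
Proof.
elim: s i j => [|x s IHs] i [|j] //= lt_ij.
by rewrite del1_S; case: i lt_ij => [|i] //=; rewrite ltnS; apply: IHs.
Qed.

Lemma size_del1 i s : (i < size s)%N -> size (del1 i s) = (size s).-1.
Proof.
elim: s i => [|x s IHs] [|i] // lt_is; first by rewrite del1_0.
by rewrite del1_S /= IHs //; case: s {IHs} lt_is.
Qed.

Lemma size_del2 i j s : (i < j < size s)%N -> size (del2 i j s) = (size s).-2.
Proof. by case/andP=> lt_ij lt_js; rewrite del2_del1 // !size_del1 //; lia. Qed.

End Deletion.

Section ConsSet.
Context {n : nat}.
Implicit Types (b : bool) (S : {set 'I_n}).

Definition cons_set b S : {set 'I_n.+1} :=
  (if b then [set ord0] else set0) :|: lift ord0 @: S.

Lemma ord0_notin_lift S : ord0 \notin lift ord0 @: S.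
Proof. by apply/imsetP => -[i _ /eqP]; rewrite (negbTE (neq_lift _ _)). Qed.

Lemma cons_set_ord0 b S : (ord0 \in cons_set b S) = b.
Proof.
rewrite in_setU (negbTE (ord0_notin_lift S)) orbF.
by case: b; rewrite ?in_set1 ?in_set0.
Qed.

Lemma cons_set_lift b S i : (lift ord0 i \in cons_set b S) = (i \in S).
Proof.
rewrite in_setU mem_imset; last exact: lift_inj.
by case: b; rewrite ?in_set1 ?in_set0 // eq_sym (negbTE (neq_lift _ _)).
Qed.

Lemma card_cons_set b S : #|cons_set b S| = (b + #|S|)%N.
Proof.
case: b; rewrite /cons_set ?set0U ?cardsU1 ?ord0_notin_lift.
all: by rewrite card_imset //; apply: lift_inj.
Qed.

Lemma big_cons_set (V : nmodType) (G : {set 'I_n.+1} -> V) :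
  \sum_(A : {set 'I_n.+1}) G A = \sum_S (G (cons_set true S) + G (cons_set false S)).
Proof.
rewrite (reindex (fun p : bool * {set 'I_n} => cons_set p.1 p.2)) /=.
  by rewrite -(pair_big xpredT xpredT (fun b S => G (cons_set b S))) big_bool -big_split.
exists (fun A : {set 'I_n.+1} => (ord0 \in A, [set i : 'I_n | lift ord0 i \in A])).
  move=> [b S] _ /=.
  by rewrite cons_set_ord0; congr pair; apply/setP => i; rewrite inE cons_set_lift.
move=> A _; apply/setP => i; case: (unliftP ord0 i) => [j ->|->].
  by rewrite cons_set_lift inE.
by rewrite cons_set_ord0.
Qed.

End ConsSet.

Lemma applyP_cons_set {k : fieldType} {g : lmodType k} (P : g -> g) (a : g)
    (t : seq g) (b : bool) (S : {set 'I_(size t)}) :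
  @applyP _ _ P (a :: t) (cons_set b S) = (if b then P a else a) :: applyP P S.
Proof.
rewrite /applyP enum_ordSl /= cons_set_ord0; congr (_ :: _).
by rewrite -map_comp; apply: eq_map => i /=; rewrite cons_set_lift.
Qed.

Lemma subrACA (V : zmodType) (x y z w : V) : x - y - (z - w) = x - z - (y - w).
Proof. by rewrite !opprD !opprK addrACA. Qed.

Section Psi.
Context {k : fieldType} {g M : lmodType k} {P : g -> g} {PM : {additive M -> M}}.
Implicit Types (F G : seq g -> M) (s : seq g).

Fixpoint psi F s : M :=
  if s is a :: t then psi (fun u => F (P a :: u)) t - PM (psi (fun u => F (a :: u)) t)
  else F [::].

Lemma psi_cons F a s :
  psi F (a :: s) = psi (fun u => F (P a :: u)) s - PM (psi (fun u => F (a :: u)) s).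
Proof. by []. Qed.

Lemma eq_psi s F G : (forall u, size u = size s -> F u = G u) -> psi F s = psi G s.
Proof.
elim: s F G => [|a t IHt] F G eqFG /=; first exact: eqFG.
by congr (_ - PM _); apply: IHt => u su; rewrite eqFG //= su.
Qed.

Lemma psi0 s : psi (fun=> 0) s = 0.
Proof. by elim: s => [|a t IHt] //=; rewrite IHt raddf0 subr0. Qed.

Lemma psiD s F G : psi (fun u => F u + G u) s = psi F s + psi G s.
Proof.
elim: s F G => [|a t IHt] F G //=.
by rewrite !IHt raddfD opprD addrACA.
Qed.

Lemma psi_sum (I : Type) (r : seq I) (p : pred I) (F : I -> seq g -> M) s :
  psi (fun u => \sum_(i <- r | p i) F i u) s = \sum_(i <- r | p i) psi (F i) s.
Proof.
elim: r => [|i r IHr].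
  by rewrite [RHS]big_nil -[RHS](psi0 s); apply: eq_psi => u _; rewrite big_nil.
rewrite [RHS]big_cons -IHr; case: ifP => pi.
  by rewrite -psiD; apply: eq_psi => u _; rewrite big_cons pi.
by apply: eq_psi => u _; rewrite big_cons pi.
Qed.

Lemma psi_comp (D : M -> M) :
    {morph D : x y / x - y} -> (forall x, D (PM x) = PM (D x)) ->
  forall s F, psi (D \o F) s = D (psi F s).
Proof.
move=> DB DPM; elim=> [|a t IHt] F //=.
by rewrite DB DPM !IHt.
Qed.

Lemma psiB s F G : psi (fun u => F u - G u) s = psi F s - psi G s.
Proof.
elim: s F G => [|a t IHt] F G //=.
by rewrite !IHt raddfB subrACA.
Qed.

Lemma psi_del1 s i (G : g -> seq g -> M) : (i < size s)%N ->
  psi (fun u => G u`_i (del1 i u)) s =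
  psi (G (P s`_i)) (del1 i s) - PM (psi (G s`_i) (del1 i s)).
Proof.
elim: s i G => [|a t IHt] [|i] G // lt_it; rewrite psi_cons.
  by rewrite del1_0; congr (_ - PM _); apply: eq_psi => u _; rewrite del1_0.
rewrite del1_S psi_cons.
rewrite (eq_psi _ _ (fun u => G u`_i (P a :: del1 i u))); last first.
  by move=> u _; rewrite del1_S.
rewrite [X in _ - PM X](eq_psi _ _ (fun u => G u`_i (a :: del1 i u))); last first.
  by move=> u _; rewrite del1_S.
rewrite (IHt i (fun y v => G y (P a :: v))) // (IHt i (fun y v => G y (a :: v))) //.
by rewrite !(raddfB PM) subrACA.
Qed.

Lemma PsiME F s : PsiM P PM F s = psi F s.
Proof.
elim: s F => [|a t IHt] F.
  rewrite /PsiM (big_pred1 set0) => [|S]; last by apply/esym/eqP/setP => -[].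
  rewrite cards0 expr0 scale1r /=; congr F.
  by apply: size0nil; rewrite size_map size_enum_ord.
rewrite /PsiM big_cons_set /= -!IHt /PsiM raddf_sum -sumrN -big_split /=.
apply: eq_bigr => S _; rewrite !card_cons_set !applyP_cons_set add1n add0n subSS.
rewrite subSn; last by rewrite -[X in (_ <= X)%N](card_ord (size t)) max_card.
by rewrite exprS iterS raddfZsign -scalerA scaleN1r.
Qed.

End Psi.

Arguments psi {k g M} P PM F s.

Lemma lin_mapB {k : fieldType} {U V : lmodType k} {F : U -> V} :
  lin_map F -> {morph F : x y / x - y}.
Proof. by move=> linF x y; rewrite addrC -scaleN1r linF scaleN1r addrC. Qed.

Lemma lin_mapD {k : fieldType} {U V : lmodType k} {F : U -> V} :
  lin_map F -> {morph F : x y / x + y}.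
Proof. by move=> linF x y; rewrite -[x]scale1r linF !scale1r. Qed.

Lemma eq_CE_diff {k : fieldType} {g M : lmodType k} (br : g -> g -> g)
    (act : g -> M -> M) (F G : seq g -> M) (s : seq g) :
  F =1 G -> CE_diff br act F s = CE_diff br act G s.
Proof.
move=> eqFG; rewrite /CE_diff; congr (_ + _).
  by apply: eq_bigr => i _; rewrite eqFG.
by apply: eq_bigr => i _; apply: eq_bigr => j _; rewrite eqFG.
Qed.

Section ChainMap.
Context {k : fieldType} {g M : lmodType k}.
Context {mu : g -> g -> g} {P : g -> g} {act : g -> M -> M} {PM : M -> M}.
Hypotheses (hNj : is_nijenhuis mu P) (hact : forall a, lin_map (act a))
  (hPM : lin_map PM) (hNjrep : is_nijenhuis_rep act P PM).

HB.instance Definition _ := GRing.isLinear.Build k M M *:%R PM hPM.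

Local Notation psi := (psi P PM).

Lemma psiZ c F s : psi (fun u => c *: F u) s = c *: psi F s.
Proof. by apply: (psi_comp ( *:%R c)) => [x y|x] /=; rewrite ?scalerBr ?linearZ. Qed.

Lemma nijenhuis_rep_comm a x :
  act (P a) (PM x) - PM (act a (PM x)) = PM (act (P a) x - PM (act a x)).
Proof. by rewrite hNjrep !linearB linearD /= addrAC addrK. Qed.

Lemma psi_act f s i : (i < size s)%N ->
  psi (fun u => act u`_i (f (del1 i u))) s =
  - PM (act s`_i (psi f (del1 i s))) + act (P s`_i) (psi f (del1 i s)).
Proof.
move=> lt_is; rewrite (psi_del1 _ _ (fun a v => act a (f v))) //.
set a := s`_i; set t := del1 i s.
pose D x := act (P a) x - PM (act a x).
have DB : {morph D : x y / x - y}.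
  by move=> x y; rewrite /D !(lin_mapB (hact _)) linearB subrACA.
rewrite [RHS]addrC -/(D (psi f t)) -(psi_comp D DB (nijenhuis_rep_comm a)) psiB.
by rewrite (psi_comp PM) // => x y; rewrite linearB.
Qed.

Lemma psi_bracket f s i j : (i < j < size s)%N ->
  (forall w, size w = size (del2 i j s) -> lin_map (fun x => f (x :: w))) ->
  psi (fun u => f (mu u`_i u`_j :: del2 i j u)) s =
  - PM (psi f (mu s`_i s`_j :: del2 i j s)) +
  psi f (bracketP mu P s`_i s`_j :: del2 i j s).
Proof.
case/andP => lt_ij lt_js linf.
have lt_i : (i < size (del1 j s))%N by rewrite size_del1 //; lia.
rewrite (eq_psi _ _ (fun u => f (mu (del1 j u)`_i u`_j :: del1 i (del1 j u)))); last first.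
  by move=> u _; rewrite nth_del1 // del2_del1.
rewrite (psi_del1 _ _ (fun b v => f (mu v`_i b :: del1 i v))) //.
rewrite (psi_del1 _ _ (fun a w => f (mu a (P s`_j) :: w))) //.
rewrite (psi_del1 _ _ (fun a w => f (mu a s`_j :: w))) //.
rewrite nth_del1 // -del2_del1 //.
set a := s`_i; set b := s`_j; set t := del2 i j s.
have psi_head x y z : psi (fun w => f (x + y - z :: w)) t =
    psi (fun w => f (x :: w)) t + psi (fun w => f (y :: w)) t - psi (fun w => f (z :: w)) t.
  rewrite -psiD -psiB; apply: eq_psi => w sw.
  by rewrite (lin_mapB (linf w sw)) (lin_mapD (linf w sw)).
rewrite !psi_cons /= /bracketP -hNj psi_head !(raddfB PM) (raddfD PM).
by rewrite [RHS]addrC -[RHS]addrA -opprD addrA subrK -addrA -opprD addrCA addrA.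
Qed.

Lemma PsiM_CE_diff {n : nat} {f : seq g -> M} {s : seq g} :
  (forall w, (size w).+1 = n -> lin_map (fun x => f (x :: w))) -> size s = n.+1 ->
  PsiM P PM (delta_Lie mu act f) s = delta_NjO mu act P PM (PsiM P PM f) s.
Proof.
move=> linf sz_s.
rewrite PsiME /delta_NjO /partialP /delta_Lie !(eq_CE_diff _ _ _ _ _ (PsiME f)).
rewrite (eq_psi _ _ (fun u =>
    \sum_(i < size s) (-1) ^+ i *: act u`_i (f (del1 i u)) +
    \sum_(i < size s) \sum_(j < size s | (i < j)%N)
      (-1) ^+ (i + j) *: f (mu u`_i u`_j :: del2 i j u))); last first.
  by move=> u sz_u; rewrite /CE_diff sz_u.
rewrite psiD !psi_sum /CE_diff (raddfD PM) opprD addrACA.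
congr (_ + _); rewrite raddf_sum -sumrN -big_split; apply: eq_bigr => i _ /=.
  by rewrite psiZ psi_act // scalerDr scalerN -linearZ.
rewrite psi_sum raddf_sum -sumrN -big_split; apply: eq_bigr => j lt_ij /=.
rewrite psiZ psi_bracket; first by rewrite scalerDr scalerN -linearZ.
  by rewrite lt_ij ltn_ord.
move=> w sz_w; apply: linf; rewrite sz_w size_del2 ?lt_ij ?ltn_ord //.
by have := ltn_ord j; lia.
Qed.

End ChainMap.

Theorem proposition6p3 (k : fieldType) (hchar : [pchar k] =i pred0)
  (g M : lmodType k) (mu : g -> g -> g) (P : g -> g)
  (act : g -> M -> M) (PM : M -> M)
  (hlie : is_lie_algebra mu) (hP : lin_map P) (hNj : is_nijenhuis mu P)
  (hrep : is_lie_rep mu act) (hPM : lin_map PM)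
  (hNjrep : is_nijenhuis_rep act P PM)
  (n : nat) (f : seq g -> M)
  (hf_lin : multilinear n f) (hf_alt : alternating n f)
  (s : seq g) (hs : size s = n.+1) :
  PsiM P PM (delta_Lie mu act f) s = delta_NjO mu act P PM (PsiM P PM f) s.
Proof.
have [[hact _] _] := hrep.
apply: (PsiM_CE_diff hNj hact hPM hNjrep _ hs) => w sz_w.
exact: hf_lin [::] w sz_w.
Qed.
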